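(* Let $(B_{i,j})_{i,j\in\mathbb{Z}}$ be an infinite matrix with $B_{i,j}=0$ whenever $i\le 0$ or $j\le 0$. Then there is a unique infinite matrix $(A_{i,j})_{i,j\in\mathbb{Z}}$ such that $$B_{i,j}=A_{i,j}-A_{i-1,j}-A_{i,j-1}\quad\text{for all } i,j\in\mathbb{Z}$$ and $A_{0,j}=A_{i,0}=0$ for all $i,j\in\mathbb{Z}$. It is given by $$A_{i,j}=\sum_{k=0}^{\infty}\sum_{l=0}^{k}\binom{k}{l}B_{i-l,j-k+l}.$$
   Context: In the paper the defining relation is written as $B_{i,j}=(\mathrm{id}-(E_i^{-1}+E_j^{-1}))A_{i,j}$, where $E_x$ is the shift operator $E_x a(x)=a(x+1)$; this equals $A_{i,j}-A_{i-1,j}-A_{i,j-1}$. *)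

From HB Require Import structures.
From mathcomp Require Import all_boot all_order all_algebra.
Set Implicit Arguments. Unset Strict Implicit. Unset Printing Implicit Defensive.
Import Order.TTheory GRing.Theory Num.Theory.
Local Open Scope ring_scope.

(* An infinite series  sum_{k>=0} f k  in an abelian group (no topology):
   it "equals" s when its partial sums are eventually equal to s.
   (In the statement all but finitely many terms vanish.) *)
Definition has_sum (R : zmodType) (f : nat -> R) (s : R) : Prop :=
  exists N : nat, forall M : nat, (N <= M)%N -> \sum_(k < M) f k = s.

Definition solves (R : zmodType) (B A : int -> int -> R) : Prop :=
  (forall i j : int, B i j = A i j - A (i - 1) j - A i (j - 1)) /\
  (forall j : int, A 0 j = 0) /\ (forall i : int, A i 0 = 0).

Definition formula_term (R : zmodType) (B : int -> int -> R) (i j : int) (k : nat) : R :=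
  \sum_(l < k.+1) B (i - (l : nat)%:Z) (j - k%:Z + (l : nat)%:Z) *+ 'C(k, l).

(* Reading the relation as A_{i,j} = B_{i,j} + A_{i-1,j} + A_{i,j-1}, the
   boundary values force A to vanish off the positive quadrant and determine
   it inside by induction, so A is unique.  The k-th term T_k of the formula
   satisfies Pascal's recursion T_{k+1}(i,j) = T_k(i-1,j) + T_k(i,j-1), and it
   vanishes once k >= |i| + |j| because then every B_{i-l,j-k+l} it involves
   has a nonpositive index.  Hence the series is a finite sum which solves the
   relation, and by uniqueness it is the solution. *)
From mathcomp Require Import all_boot all_order all_algebra.
From mathcomp Require Import zify.
Import GRing.Theory Num.Theory.
Local Open Scope ring_scope.
Set Implicit Arguments. Unset Strict Implicit.

Section Solutions.
Variable R : zmodType.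

Lemma solves_rec (B A : int -> int -> R) : solves B A ->
  forall i j, A i j = B i j + A (i - 1) j + A i (j - 1).
Proof.
move=> [hrel _] i j.
by rewrite hrel -addrA [A (i - 1) j + _]addrC addrA !subrK.
Qed.

Lemma solves_transpose (B A : int -> int -> R) : solves B A ->
  solves (fun i j => B j i) (fun i j => A j i).
Proof. by move=> [hrel [hA0j hAi0]]; split=> [i j|//]; rewrite hrel addrAC. Qed.

Lemma solves_eq0_neg_right (B A : int -> int -> R) :
  (forall i j : int, j <= 0 -> B i j = 0) -> solves B A ->
  forall (n : nat) i, A i (- n%:Z) = 0.
Proof.
move=> hB [hrel [_ hAi0]]; elim=> [|n IHn] i; first exact: hAi0.
have := hrel i (- n%:Z); rewrite hB ?oppr_le0 // !IHn subrr sub0r.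
have -> : - n%:Z - 1 = - n.+1%:Z by lia.
by move/esym/eqP; rewrite oppr_eq0 => /eqP.
Qed.

Lemma solves_eq0_neg_left (B A : int -> int -> R) :
  (forall i j : int, i <= 0 -> B i j = 0) -> solves B A ->
  forall (n : nat) j, A (- n%:Z) j = 0.
Proof.
move=> hB /solves_transpose hA n j.
exact: (solves_eq0_neg_right (fun j i => hB i j) hA).
Qed.

Lemma solves_unique (B A1 A2 : int -> int -> R) :
  (forall i j : int, i <= 0 \/ j <= 0 -> B i j = 0) ->
  solves B A1 -> solves B A2 -> forall i j, A1 i j = A2 i j.
Proof.
move=> hB h1 h2.
have hBi i j : i <= 0 -> B i j = 0 by move=> hi; apply: hB; left.
have hBj i j : j <= 0 -> B i j = 0 by move=> hj; apply: hB; right.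
have quadrant (m n : nat) : A1 m n = A2 m n.
  elim: m n => [|m IHm] n; first by case: h1 => _ [-> _]; case: h2 => _ [-> _].
  elim: n => [|n IHn]; first by case: h1 => _ [_ ->]; case: h2 => _ [_ ->].
  rewrite (solves_rec h1) (solves_rec h2).
  have -> : m.+1%:Z - 1 = m by lia.
  have -> : n.+1%:Z - 1 = n by lia.
  by rewrite IHm IHn.
move=> [m|m] [n|n]; rewrite ?NegzE; first exact: quadrant;
  by rewrite ?(solves_eq0_neg_right hBj h1) ?(solves_eq0_neg_right hBj h2)
             ?(solves_eq0_neg_left hBi h1) ?(solves_eq0_neg_left hBi h2).
Qed.

End Solutions.

Section ExplicitFormula.
Variables (R : zmodType) (B : int -> int -> R).

Lemma formula_term0 i j : formula_term B i j 0 = B i j.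
Proof. by rewrite /formula_term big_ord1 /= mulr1n; congr (B _ _); lia. Qed.

Lemma formula_termS i j k : formula_term B i j k.+1 =
  formula_term B (i - 1) j k + formula_term B i (j - 1) k.
Proof.
rewrite /formula_term big_ord_recl /=.
under eq_bigr => l _ do rewrite /bump /= binS mulrnDr.
rewrite big_split /= addrA addrC; congr (_ + _).
  by apply: eq_bigr => l _; congr (B _ _ *+ _); lia.
rewrite [in RHS]big_ord_recl big_ord_recr /= (bin_small (ltnSn k)) mulr0n addr0 !bin0.
congr (_ + _); first by congr (B _ _ *+ _); lia.
by rewrite addr0; apply: eq_bigr => l _; rewrite /bump /=; congr (B _ _ *+ _); lia.
Qed.

Definition formula_partial i j M := \sum_(k < M) formula_term B i j k.

Lemma formula_partialS i j M : formula_partial i j M.+1 =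
  B i j + formula_partial (i - 1) j M + formula_partial i (j - 1) M.
Proof.
rewrite /formula_partial big_ord_recl formula_term0 -addrA -big_split /=.
by congr (_ + _); apply: eq_bigr => k _; rewrite formula_termS.
Qed.

Hypothesis hB : forall i j : int, i <= 0 \/ j <= 0 -> B i j = 0.

Lemma formula_term_eq0 i j k : i <= 0 \/ j <= 0 \/ i + j <= k%:Z + 1 ->
  formula_term B i j k = 0.
Proof.
move=> hijk; rewrite /formula_term big1 // => l _.
by rewrite hB ?mul0rn //; have := ltn_ord l; lia.
Qed.

Definition formula_length (i j : int) := (absz i + absz j).+1.

Definition formula_sol i j := formula_partial i j (formula_length i j).

Lemma formula_partial_stable i j M : (formula_length i j <= M)%N ->
  formula_partial i j M = formula_sol i j.
Proof.
elim: M => [|M IHM] hM; first by rewrite /formula_length in hM.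
have [hlt|hge] := leqP (formula_length i j) M; last first.
  by have -> : M.+1 = formula_length i j by apply/eqP; rewrite eqn_leq hM hge.
rewrite /formula_partial big_ord_recr /= -/(formula_partial i j M) IHM //.
rewrite formula_term_eq0 ?addr0 //.
by right; right; move: hlt; rewrite /formula_length; lia.
Qed.

Lemma formula_sol_solves : solves B formula_sol.
Proof.
split; last split.
- move=> i j; set M := formula_length i j.
  rewrite -(@formula_partial_stable i j M.+2); last by rewrite /M; lia.
  rewrite -(@formula_partial_stable (i - 1) j M.+1); last by rewrite /M /formula_length; lia.
  rewrite -(@formula_partial_stable i (j - 1) M.+1); last by rewrite /M /formula_length; lia.
  by rewrite formula_partialS addrAC !addrK.
- move=> j; rewrite /formula_sol /formula_partial big1 // => k _.
  by rewrite formula_term_eq0 //; left.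
- move=> i; rewrite /formula_sol /formula_partial big1 // => k _.
  by rewrite formula_term_eq0 //; right; left.
Qed.

End ExplicitFormula.

Theorem proposition2 (R : zmodType) (B : int -> int -> R)
  (hB : forall i j : int, (i <= 0)%R \/ (j <= 0)%R -> B i j = 0) :
  (exists A : int -> int -> R, solves B A) /\
  (forall A1 A2 : int -> int -> R, solves B A1 -> solves B A2 ->
     forall i j : int, A1 i j = A2 i j) /\
  (forall A : int -> int -> R, solves B A ->
     forall i j : int, has_sum (formula_term B i j) (A i j)).
Proof.
have hsol := formula_sol_solves hB.
split; first by exists (formula_sol B).
split; first by move=> A1 A2; exact: solves_unique.
move=> A hA i j; exists (formula_length i j) => M hM.
by rewrite (solves_unique hB hA hsol); exact: formula_partial_stable.
Qed.
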